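(* Fix $n\in\mathbb N$. For integers $k$ with $1\le |k|\le n$ let $$p_{nk}=\frac{(-1)^{k+1}(n!)^2}{k\,(n+k)!\,(n-k)!},$$ and let $p_{n0}=0$. (Equivalently, $p_{nk}=\pi_{nk}'(0)$ for $|k|\le n$, where $\pi_{nk}$ is the Lagrange basis polynomial of degree $2n$ for the nodes $-n,\dots,n$, i.e. the unique polynomial of degree $2n$ with $\pi_{nk}(j)=\delta_{kj}$ for all integers $|j|\le n$.) Then: (i) the sequence $\bigl((-1)^{k+1}p_{nk}\bigr)_{1\le k\le n}$ is positive and monotone decreasing, and $p_{n,-k}=-p_{nk}$ for $1\le k\le n$; (ii) for integers $0\le j\le 2n$ (with the convention $0^0=1$), $$\sum_{k=-n}^n p_{nk}k^j=\begin{cases}1,& j=1,\\ 0,& j=0\text{ or }2\le j\le 2n;\end{cases}$$ (iii) $\displaystyle\sum_{k=1}^n|p_{nk}|=\frac{H_n}{2}$ and $\displaystyle\sum_{k=1}^n p_{nk}=H_{2n}-H_n$, where $H_n=\sum_{k=1}^n k^{-1}$ is the $n$-th harmonic number. *)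

From mathcomp Require Import all_boot all_order all_algebra.
Set Implicit Arguments. Unset Strict Implicit. Unset Printing Implicit Defensive.
Import Order.TTheory GRing.Theory Num.Theory.
Local Open Scope ring_scope.

(* p_{nk} = (-1)^(k+1) (n!)^2 / (k (n+k)! (n-k)!) for 1 <= |k| <= n, p_{n0} = 0.
   (-1)^(k+1) = (-1)^(|k|+1) since k and |k| have the same parity.
   Outside |k| <= n the paper leaves p_{nk} undefined; we set it to 0 (never used). *)
Definition pnk (R : fieldType) (n : nat) (k : int) : R :=
  if (k != 0) && (absz k <= n)%N then
    ((-1) ^+ (absz k).+1 * (n`!)%:R ^+ 2) /
    (k%:~R * (absz (n%:Z + k))`!%:R * (absz (n%:Z - k))`!%:R)
  else 0.

Definition harmonic (R : fieldType) (n : nat) : R :=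
  \sum_(1 <= k < n.+1) (k%:R)^-1.

(* For [1 <= k <= n] write [|p_nk| = b(n,k) / k] with [b(n,k) = C(2n, n+k) / C(2n, n)].
   Then [k p_nk = (-1)^(n+1) / C(2n, n) * (-1)^(n+k) C(2n, n+k)], so for [j >= 1] the
   [j]-th moment is, up to that factor, the alternating binomial sum of the polynomial
   [(i - n)^(j-1)] of degree [< 2n] over [0 <= i <= 2n] (a vanishing [2n]-th finite
   difference) minus its [i = n] term, which is nonzero only for [j = 1]; the zeroth
   moment vanishes by oddness. For the harmonic sums,
   [b(n+1,k) ((n+1)^2 - k^2) = (n+1)^2 b(n,k)] gives
   [b(n+1,k) / k = b(n,k) / k + k b(n+1,k) / (n+1)^2], so both identities follow by
   induction on [n] from the telescoping sums [sum_k k b(n,k) = n / 2] and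
   [sum_k (-1)^(k+1) k b(n,k) = n / (2 (2n - 1))]. *)

From mathcomp Require Import all_boot all_order all_algebra zify ring.
Set Implicit Arguments. Unset Strict Implicit. Unset Printing Implicit Defensive.
Import Order.TTheory GRing.Theory Num.Theory.
Local Open Scope ring_scope.

Section AlternatingBinomialSum.
Variable R : comPzRingType.

(* [(-1)^m] times the [m]-th forward difference of [f] at [0]. *)
Definition alt_binom_sum m (f : nat -> R) :=
  \sum_(i < m.+1) (-1) ^+ i * 'C(m, i)%:R * f i.

Lemma eq_alt_binom_sum m f g : f =1 g -> alt_binom_sum m f = alt_binom_sum m g.
Proof. by move=> eq_fg; apply: eq_bigr => i _; rewrite eq_fg. Qed.

Lemma alt_binom_sumS m f :
  alt_binom_sum m.+1 f = alt_binom_sum m f - alt_binom_sum m (fun i => f i.+1).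
Proof.
rewrite /alt_binom_sum big_ord_recl /=.
under eq_bigr => i _ do rewrite /bump /= binS natrD mulrDr mulrDl.
rewrite big_split addrA; congr (_ + _).
  rewrite [in LHS]big_ord_recr /= (bin_small (ltnSn m)) mulr0 mul0r addr0.
  by rewrite [in RHS]big_ord_recl /= !bin0.
rewrite -sumrN; apply: eq_bigr => i _; rewrite add1n exprS; ring.
Qed.

Lemma alt_binom_sum_lin m e (a : nat -> R) (F : nat -> nat -> R) :
  alt_binom_sum m (fun i => \sum_(l < e) a l * F l i) =
  \sum_(l < e) a l * alt_binom_sum m (F l).
Proof.
rewrite /alt_binom_sum; under eq_bigr do rewrite mulr_sumr.
rewrite exchange_big; apply: eq_bigr => l _ /=.
rewrite mulr_sumr; apply: eq_bigr => i _; ring.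
Qed.

Lemma alt_binom_sum_poly m e c :
  (e < m)%N -> alt_binom_sum m (fun i => (i%:R + c) ^+ e) = 0.
Proof.
elim: m e => // m IH e lt_em.
have shift i : (i.+1%:R + c) ^+ e = \sum_(l < e.+1) 'C(e, l)%:R * (i%:R + c) ^+ l.
  by rewrite -natr1 addrAC exprD1n; apply: eq_bigr => l _; rewrite mulr_natl.
rewrite alt_binom_sumS (eq_alt_binom_sum _ shift).
rewrite (alt_binom_sum_lin _ _ (fun l => 'C(e, l)%:R) (fun l i => (i%:R + c) ^+ l)).
rewrite big_ord_recr /= binn mul1r big1 ?add0r ?subrr // => l _.
by rewrite IH ?mulr0 // (leq_trans (ltn_ord l)).
Qed.

End AlternatingBinomialSum.

Lemma mul_binSS m j :
  (j.+1 * (m.+1 - j) * 'C(m.+2, j.+1) = m.+2 * m.+1 * 'C(m, j))%N.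
Proof.
by rewrite [(_ * (m.+1 - j))%N]mulnC -mulnA -mul_bin_diag mulnCA -mul_bin_down mulnA.
Qed.

Section BinomialRatio.
Variable R : numFieldType.

Lemma natr_fact_neq0 m : m`!%:R != 0 :> R.
Proof. by rewrite pnatr_eq0 -lt0n fact_gt0. Qed.

Lemma natr_bin m j : (j <= m)%N ->
  'C(m, j)%:R = m`!%:R / (j`!%:R * (m - j)`!%:R) :> R.
Proof.
move=> le_jm; rewrite -(bin_fact le_jm) !natrM mulfK //.
by rewrite mulf_neq0 ?natr_fact_neq0.
Qed.

Definition bin_ratio n k : R := 'C(2 * n, n + k)%:R / 'C(2 * n, n)%:R.

Lemma central_bin_neq0 n : 'C(2 * n, n)%:R != 0 :> R.
Proof. by rewrite pnatr_eq0 -lt0n bin_gt0 leq_pmull. Qed.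

Lemma bin_ratio0 n : bin_ratio n 0 = 1.
Proof. by rewrite /bin_ratio addn0 divff ?central_bin_neq0. Qed.

Lemma bin_ratio_small n k : (n < k)%N -> bin_ratio n k = 0.
Proof. by move=> lt_nk; rewrite /bin_ratio bin_small ?mul0r //; lia. Qed.

Lemma bin_ratio_gt0 n k : (k <= n)%N -> 0 < bin_ratio n k.
Proof.
move=> le_kn; rewrite /bin_ratio divr_gt0 // ltr0n bin_gt0; lia.
Qed.

Lemma bin_ratio_ge0 n k : 0 <= bin_ratio n k.
Proof.
by case: (leqP k n) => [/bin_ratio_gt0/ltW | /bin_ratio_small ->].
Qed.

Lemma bin_ratio_fact n k : (k <= n)%N ->
  bin_ratio n k = n`!%:R ^+ 2 / ((n + k)`!%:R * (n - k)`!%:R).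
Proof.
move=> le_kn; rewrite /bin_ratio !natr_bin; try lia.
have -> : (2 * n - (n + k) = n - k)%N by lia.
have -> : (2 * n - n = n)%N by lia.
by field; rewrite !natr_fact_neq0.
Qed.

Lemma bin_ratioSr n k :
  bin_ratio n k.+1 * (n + k.+1)%:R = bin_ratio n k * (n - k)%:R.
Proof.
rewrite /bin_ratio mulrAC -natrM addnS mulnC mul_bin_left.
have -> : (2 * n - (n + k) = n - k)%N by lia.
rewrite natrM; ring.
Qed.

Lemma bin_ratio1 n : bin_ratio n 1 * n.+1%:R = n%:R.
Proof. by have := bin_ratioSr n 0; rewrite addn1 bin_ratio0 subn0 mul1r. Qed.

Lemma bin_ratioSn n k :
  bin_ratio n.+1 k * ((n.+1 + k)%:R * (n.+1 - k)%:R) = bin_ratio n k * n.+1%:R ^+ 2.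
Proof.
have := mul_binSS (2 * n) (n + k); have := mul_binSS (2 * n) n.
have -> : ((2 * n).+1 - n = n.+1)%N by lia.
have -> : ((2 * n).+1 - (n + k) = n.+1 - k)%N by lia.
move=> /(congr1 (fun m => m%:R : R)); rewrite !natrM => central off_central.
rewrite /bin_ratio (_ : 2 * n.+1 = (2 * n).+2)%N ?addSn; last by lia.
rewrite mulrAC -!natrM [(_ * (_ * _))%N]mulnC off_central !natrM.
(* Opaque names keep [field] from normalising the casts into sums. *)
move: central; set m := n.+1%:R; set a := (2 * n).+2%:R; set b := (2 * n).+1%:R.
have [m_neq0 a_neq0 b_neq0] : [/\ m != 0, a != 0 & b != 0] by rewrite !pnatr_eq0.
clearbody m a b => central.
have -> : 'C((2 * n).+2, n.+1)%:R = a * b * 'C(2 * n, n)%:R / m ^+ 2.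
  by rewrite -central -expr2 [m ^+ 2 * _]mulrC mulfK ?expf_neq0.
by field; rewrite central_bin_neq0 m_neq0 a_neq0 b_neq0.
Qed.

Lemma bin_ratio_divSn n k : (0 < k)%N ->
  bin_ratio n.+1 k / k%:R =
  bin_ratio n k / k%:R + k%:R * bin_ratio n.+1 k / n.+1%:R ^+ 2.
Proof.
move=> k_gt0; case: (leqP k n.+1) => [le_kn1 | lt_n1k]; last first.
  by rewrite !bin_ratio_small ?(mul0r, mulr0, add0r) //; apply: ltn_trans lt_n1k.
have := bin_ratioSn n k; rewrite natrD natrB //.
have [k_neq0 n1_neq0] : k%:R != 0 :> R /\ n.+1%:R != 0 :> R by rewrite !pnatr_eq0 -lt0n.
move: k_neq0 n1_neq0; set x := k%:R; set m := n.+1%:R; clearbody x m => x_neq0 m_neq0.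
move=> /(congr1 (fun y => y / m ^+ 2)) /=; rewrite mulfK ?expf_neq0 // => <-.
by field; rewrite x_neq0 m_neq0.
Qed.

Lemma bin_ratio_div_decr n k : (0 < k < n)%N ->
  bin_ratio n k.+1 / k.+1%:R < bin_ratio n k / k%:R.
Proof.
move=> /andP[k_gt0 lt_kn].
have -> : bin_ratio n k.+1 = bin_ratio n k * ((n - k)%:R / (n + k.+1)%:R).
  by rewrite mulrA -bin_ratioSr mulfK // pnatr_eq0 addnS.
rewrite -mulrA ltr_pM2l ?(bin_ratio_gt0 (ltnW lt_kn)) // -mulrA -invfM.
rewrite ltr_pdivrMr ?mulr_gt0 ?ltr0n ?addnS // mulrC ltr_pdivlMr ?ltr0n //.
by rewrite -!natrM ltr_nat; nia.
Qed.

End BinomialRatio.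

Lemma signr_addn_double (R : pzRingType) a b :
  (-1) ^+ (a + b.*2) = (-1) ^+ a :> R.
Proof. by rewrite -signr_odd oddD odd_double addbF signr_odd. Qed.

Lemma pnkN (R : fieldType) n k : pnk R n (- k) = - pnk R n k.
Proof.
rewrite /pnk abszN oppr_eq0 opprK; case: ifP => _; last by rewrite oppr0.
rewrite mulrNz !mulNr invrN mulrN; congr (- (_ * _^-1)).
by rewrite -!mulrA [X in _ * X]mulrC.
Qed.

Section LagrangeWeights.
Variable R : numFieldType.
Local Notation pnk := (pnk R).
Local Notation bin_ratio := (bin_ratio R).

Lemma pnk_nat n k : (1 <= k <= n)%N ->
  pnk n k%:Z = (-1) ^+ k.+1 * bin_ratio n k / k%:R.
Proof.
move=> /andP[k_gt0 le_kn]; rewrite /pnk bin_ratio_fact // le_kn.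
have -> : (k%:Z != 0) by lia.
have -> : absz (n%:Z + k%:Z) = (n + k)%N by lia.
have -> : absz (n%:Z - k%:Z) = (n - k)%N by lia.
have k_neq0 : k%:R != 0 :> R by rewrite pnatr_eq0 -lt0n.
by rewrite /=; field; rewrite k_neq0 !natr_fact_neq0.
Qed.

Lemma signr_pnk_nat n k : (1 <= k <= n)%N ->
  (-1) ^+ k.+1 * pnk n k%:Z = bin_ratio n k / k%:R.
Proof. by move=> k_range; rewrite pnk_nat // mulrA signrMK. Qed.

Lemma pnk_mul_nat n k : (1 <= k <= n)%N ->
  pnk n k%:Z * k%:R = (-1) ^+ k.+1 * 'C(2 * n, n + k)%:R / 'C(2 * n, n)%:R.
Proof.
move=> /andP[k_gt0 le_kn].
by rewrite pnk_nat ?k_gt0 // mulfVK ?pnatr_eq0 -?lt0n // mulrA.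
Qed.

Lemma pnk_mul_shift n i : (i <= 2 * n)%N -> i != n ->
  pnk n (i%:Z - n%:Z) * (i%:Z - n%:Z)%:~R =
  (-1) ^+ n.+1 / 'C(2 * n, n)%:R * ((-1) ^+ i * 'C(2 * n, i)%:R).
Proof.
move=> le_i2n ne_in.
have -> : (-1) ^+ n.+1 / 'C(2 * n, n)%:R * ((-1) ^+ i * 'C(2 * n, i)%:R) =
    (-1) ^+ (n.+1 + i) * 'C(2 * n, i)%:R / 'C(2 * n, n)%:R :> R.
  by rewrite exprD; ring.
case: (ltngtP i n) ne_in => // [lt_in | lt_ni] _.
- have -> : i%:Z - n%:Z = - (n - i)%N%:Z by lia.
  rewrite pnkN mulrNz mulrNN pmulrn pnk_mul_nat; last by lia.
  have -> : (n + (n - i) = 2 * n - i)%N by lia.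
  have -> : (n.+1 + i = (n - i).+1 + i.*2)%N by lia.
  by rewrite bin_sub // signr_addn_double.
- have -> : i%:Z - n%:Z = (i - n)%N%:Z by lia.
  rewrite pmulrn pnk_mul_nat; last by lia.
  have -> : (n + (i - n) = i)%N by lia.
  have -> : (n.+1 + i = (i - n).+1 + n.*2)%N by lia.
  by rewrite signr_addn_double.
Qed.

Lemma sum_pnk_shift n : \sum_(i < (2 * n).+1) pnk n (i%:Z - n%:Z) = 0.
Proof.
set S := (X in X = 0).
have S_opp : S = - S.
  rewrite {1}/S (reindex_inj rev_ord_inj) /= -sumrN.
  apply: eq_bigr => i _; rewrite -pnkN; congr pnk.
  have := ltn_ord i; lia.
have : S *+ 2 == 0 by rewrite mulr2n {1}S_opp addNr.
by rewrite mulrn_eq0 => /eqP.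
Qed.

Lemma moment_pnk_shift n j : (j < 2 * n)%N ->
  \sum_(i < (2 * n).+1) pnk n (i%:Z - n%:Z) * (i%:Z - n%:Z)%:~R ^+ j.+1 =
  (j == 0%N)%:R.
Proof.
move=> lt_j2n; have lt_n2n : (n < (2 * n).+1)%N by lia.
pose c : R := (-1) ^+ n.+1 / 'C(2 * n, n)%:R.
have := @alt_binom_sum_poly R _ _ (- n%:R) lt_j2n.
rewrite /alt_binom_sum (bigD1 (Ordinal lt_n2n)) //= subrr expr0n => /eqP.
rewrite addrC addr_eq0 => /eqP vanish.
have pnk0 : pnk n 0 = 0 by rewrite /pnk eqxx.
rewrite (bigD1 (Ordinal lt_n2n)) //= subrr pnk0 mul0r add0r.
rewrite (eq_bigr (fun i : 'I_(2 * n).+1 =>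
  c * ((-1) ^+ i * 'C(2 * n, i)%:R * (i%:R - n%:R) ^+ j))); last first.
  move=> i ne_in; rewrite exprS mulrA pnk_mul_shift; last first.
  - by apply: contra ne_in => /eqP eq_in; apply/eqP/val_inj.
  - by have := ltn_ord i; lia.
  by rewrite intrB /c; ring.
rewrite -mulr_sumr vanish /c exprS mulN1r.
case: (j == 0%N); last by rewrite !(mulr0, oppr0).
have sign_sqr : (-1) ^+ n * (-1) ^+ n = 1 :> R.
  by rewrite -exprD addnn -signr_odd odd_double.
by rewrite mulr1 mulrN !mulNr opprK mulrCA mulfVK ?central_bin_neq0 ?sign_sqr.
Qed.

End LagrangeWeights.

Lemma harmonicS (R : fieldType) n : harmonic R n.+1 = harmonic R n + n.+1%:R^-1.
Proof. by rewrite /harmonic big_nat_recr. Qed.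

Section HarmonicSums.
Variable R : numFieldType.
Local Notation bin_ratio := (bin_ratio R).

Lemma sum_mul_bin_ratio n :
  \sum_(1 <= k < n.+1) k%:R * bin_ratio n k = n%:R / 2.
Proof.
rewrite (telescope_sumr_eq (fun k => - ((n + k)%:R * bin_ratio n k / 2))) //.
  rewrite bin_ratio_small // mulr0 mul0r oppr0 sub0r opprK addn1.
  by rewrite [_ * bin_ratio n 1]mulrC bin_ratio1.
move=> k /andP[_ le_kn].
by rewrite [(n + k.+1)%:R * _]mulrC bin_ratioSr natrB // natrD; field.
Qed.

Lemma sum_alt_mul_bin_ratio n : (0 < n)%N ->
  \sum_(1 <= k < n.+1) (-1) ^+ k.+1 * (k%:R * bin_ratio n k) =
  n%:R / (2 * (2 * n).-1%:R).
Proof.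
move=> n_gt0; have d_neq0 : (2 * n).-1%:R != 0 :> R by rewrite pnatr_eq0; lia.
have d_eq : (2 * n).-1%:R = 2 * n%:R - 1 :> R by rewrite -subn1 natrB ?natrM //; lia.
(* [(2k - 1)(n + k) + (2k + 1)(n - k) = 2k (2n - 1)] *)
rewrite (telescope_sumr_eq (fun k => (-1) ^+ k * ((2 * k%:R - 1) * (n + k)%:R *
  bin_ratio n k / (2 * (2 * n).-1%:R)))) //.
  rewrite bin_ratio_small // !(mulr0, mul0r) sub0r addn1.
  have -> : bin_ratio n 1 = n%:R / n.+1%:R by rewrite -(bin_ratio1 _ n) mulfK ?pnatr_eq0.
  rewrite expr1 mulN1r opprK.
  by field; rewrite d_neq0 nat1r pnatr_eq0.
move=> k /andP[_ le_kn].
rewrite -[_ * (n + k.+1)%:R * _]mulrA [(n + k.+1)%:R * _]mulrC bin_ratioSr.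
rewrite natrB // natrD -natr1 !exprS d_eq.
by field; rewrite -d_eq.
Qed.

Lemma sum_bin_ratio_div n :
  \sum_(1 <= k < n.+1) bin_ratio n k / k%:R = harmonic R n / 2.
Proof.
elim: n => [|n IHn]; first by rewrite /harmonic !big_geq // mul0r.
under eq_big_nat => k /andP[k_gt0 _] do rewrite bin_ratio_divSn //.
rewrite big_split /= big_nat_recr //= bin_ratio_small // mul0r addr0 IHn.
rewrite -mulr_suml sum_mul_bin_ratio harmonicS.
by field; rewrite nat1r pnatr_eq0.
Qed.

Lemma sum_alt_bin_ratio_div n :
  \sum_(1 <= k < n.+1) (-1) ^+ k.+1 * (bin_ratio n k / k%:R) =
  harmonic R (2 * n) - harmonic R n.
Proof.
elim: n => [|n IHn]; first by rewrite /harmonic !big_geq // subrr.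
under eq_big_nat => k /andP[k_gt0 _] do rewrite bin_ratio_divSn // mulrDr.
rewrite big_split /= big_nat_recr //= bin_ratio_small // mul0r mulr0 addr0 IHn.
under eq_bigr do rewrite mulrA.
rewrite -mulr_suml sum_alt_mul_bin_ratio //.
have -> : (2 * n.+1 = (2 * n).+2)%N by lia.
rewrite /= !harmonicS -!natr1 natrM.
by field; rewrite -natrM !natr1 !pnatr_eq0.
Qed.

End HarmonicSums.

Theorem mainTheorem1 (R : realFieldType) (n : nat) :
  (* (i) positivity, strict decrease, and oddness *)
  ((forall k : nat, (1 <= k <= n)%N ->
      0 < (-1) ^+ k.+1 * pnk R n k%:Z) /\
   (forall k : nat, (1 <= k < n)%N ->
      (-1) ^+ k.+2 * pnk R n k.+1%:Z < (-1) ^+ k.+1 * pnk R n k%:Z) /\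
   (forall k : nat, (1 <= k <= n)%N ->
      pnk R n (- k%:Z) = - pnk R n k%:Z)) /\
  (* (ii) moment identities *)
  (forall j : nat, (j <= 2 * n)%N ->
      \sum_(i < (2 * n).+1)
         pnk R n (i%:Z - n%:Z) * ((i%:Z - n%:Z)%:~R) ^+ j
      = (if j == 1%N then 1 else 0)) /\
  (* (iii) harmonic-number identities *)
  (\sum_(1 <= k < n.+1) `|pnk R n k%:Z| = harmonic R n / 2 /\
   \sum_(1 <= k < n.+1) pnk R n k%:Z = harmonic R (2 * n) - harmonic R n).
Proof.
split; [split; [|split] | split; [|split]].
- move=> k k_range; rewrite signr_pnk_nat // divr_gt0 ?ltr0n ?bin_ratio_gt0; lia.
- move=> k k_range; rewrite !signr_pnk_nat; try lia.
  exact: bin_ratio_div_decr.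
- by move=> k _; rewrite pnkN.
- case=> [|j] le_j2n.
    by under eq_bigr do rewrite expr0 mulr1; rewrite sum_pnk_shift.
  by rewrite moment_pnk_shift //; case: j le_j2n.
- rewrite -(sum_bin_ratio_div R); apply: eq_big_nat => k k_range.
  rewrite pnk_nat // -mulrA normrM normr_sign mul1r ger0_norm //.
  by rewrite divr_ge0 ?bin_ratio_ge0.
- rewrite -(sum_alt_bin_ratio_div R); apply: eq_big_nat => k k_range.
  by rewrite pnk_nat // -mulrA.
Qed.
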